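(* Consider the equation $g(x,y)=1$ with $y\ge x\ge0$. (i) The maximum value of $x$ among its solutions is $x_{\max}=-1/\log(2q)=\lambda_0$, and the maximum value of $y$ among its solutions is $y_{\max}=-1/\log(q(1+2p))=:\kappa_0$. (ii) If $x=x_{\max}$ then $y=-1/(p\log(2q))$. If $y=y_{\max}=\kappa_0$ then $x=2\kappa_0p/(2p+1)$. If $x=0$ then $y=-1/\log q$. (iii) For given $x$, the equation has exactly one solution in $y$ for $0\le x<-1/\log(2pq)$ and for $x=\lambda_0$, and exactly two solutions in $y$ for $-1/\log(2pq)\le x<\lambda_0$.
   Context: Let $0<q<p<1$ with $p+q=1$, and $g(x,y)=x\log x-y\log y+(y-x)\log(y-x)-x\log(2p)-y\log q$ for $y\ge x\ge0$, with the convention $0\log0=0$. *)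

From Stdlib Require Import Reals.
Open Scope R_scope.

Definition xlogx (t : R) : R := if Req_EM_T t 0 then 0 else t * ln t.

Definition g (p q x y : R) : R :=
  xlogx x - xlogx y + xlogx (y - x) - x * ln (2 * p) - y * ln q.

Definition sol (p q x y : R) : Prop := 0 <= x /\ x <= y /\ g p q x y = 1.

From Stdlib Require Import Reals Lra.
From Coquelicot Require Import Coquelicot.
Open Scope R_scope.

(* Two Gibbs inequalities drive everything.  Writing g as a sum of relative
   entropies plus a remainder gives g(x,y) >= -x log(2q), with equality iff
   x = p y, and g(x,y) >= -y log(q(1+2p)), with equality iff
   x = 2py/(1+2p); this bounds the solutions and identifies the extremal ones.
   For fixed x > 0 the y-derivative log((y-x)/(qy)) changes sign once, at
   y = x/p, so g(x,.) decreases on [x, x/p] from g(x,x) = -x log(2pq) to the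
   minimum -x log(2q) and then increases to infinity; counting solutions of
   g = 1 amounts to comparing these two values with 1. *)

Lemma ln_le_sub1 t : 0 < t -> ln t <= t - 1.
Proof.
  intros Ht. pose proof (exp_ineq1_le (ln t)) as H. rewrite exp_ln in H; lra.
Qed.

Lemma ln_lt_sub1 t : 0 < t -> t <> 1 -> ln t < t - 1.
Proof.
  intros Ht Ht1. pose proof (exp_ineq1 (ln t) (ln_neq_0 t Ht1 Ht)) as H.
  rewrite exp_ln in H; lra.
Qed.

Lemma opp_inv_pos L : L < 0 -> 0 < - / L.
Proof. intros HL. rewrite <- Rinv_opp. apply Rinv_0_lt_compat; lra. Qed.

Lemma opp_inv_mul_opp L : L <> 0 -> - / L * - L = 1.
Proof. intros HL. field. exact HL. Qed.

Definition relent (v u : R) : R := v * ln v - v * ln u.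

Lemma relent_ge v u : 0 < u -> 0 <= v -> v - u <= relent v u.
Proof.
  intros Hu [Hv|<-]; unfold relent; [|lra].
  pose proof (ln_le_sub1 (u / v) (Rdiv_lt_0_compat _ _ Hu Hv)) as H.
  rewrite ln_div in H by lra.
  apply (Rmult_le_compat_l v) in H; [|lra].
  replace (v * (u / v - 1)) with (u - v) in H by (field; lra). lra.
Qed.

Lemma relent_gt v u : 0 < u -> 0 <= v -> v <> u -> v - u < relent v u.
Proof.
  intros Hu [Hv|<-] Hvu; unfold relent; [|lra].
  assert (Huv : u / v <> 1).
  { intro E. apply Hvu. apply (Rmult_eq_reg_r (/ v)); [|apply Rinv_neq_0_compat; lra].
    rewrite Rinv_r by lra. unfold Rdiv in E. lra. }
  pose proof (ln_lt_sub1 (u / v) (Rdiv_lt_0_compat _ _ Hu Hv) Huv) as H.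
  rewrite ln_div in H by lra.
  apply (Rmult_lt_compat_l v) in H; [|lra].
  replace (v * (u / v - 1)) with (u - v) in H by (field; lra). lra.
Qed.

Lemma relent2_ge0 v1 v2 u1 u2 : 0 < u1 -> 0 < u2 -> 0 <= v1 -> 0 <= v2 ->
  v1 + v2 = u1 + u2 -> 0 <= relent v1 u1 + relent v2 u2.
Proof.
  intros Hu1 Hu2 Hv1 Hv2 Hsum.
  pose proof (relent_ge v1 u1 Hu1 Hv1). pose proof (relent_ge v2 u2 Hu2 Hv2). lra.
Qed.

Lemma relent2_eq0 v1 v2 u1 u2 : 0 < u1 -> 0 < u2 -> 0 <= v1 -> 0 <= v2 ->
  v1 + v2 = u1 + u2 -> relent v1 u1 + relent v2 u2 = 0 -> v1 = u1.
Proof.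
  intros Hu1 Hu2 Hv1 Hv2 Hsum Hzero.
  destruct (Req_dec v1 u1) as [E|E]; [exact E|exfalso].
  pose proof (relent_gt v1 u1 Hu1 Hv1 E). pose proof (relent_ge v2 u2 Hu2 Hv2). lra.
Qed.

Lemma ln_nonpos t : t <= 0 -> ln t = 0.
Proof. intros Ht. unfold ln. destruct (Rlt_dec 0 t); [exfalso; lra | reflexivity]. Qed.

Lemma xlogxE t : xlogx t = t * ln t.
Proof. unfold xlogx. destruct (Req_EM_T t 0) as [->|_]; [ring | reflexivity]. Qed.

Lemma xlnx_near0 eps : 0 < eps ->
  exists d, 0 < d /\ forall t, 0 < t < d -> Rabs (t * ln t) < eps.
Proof.
  intros Heps. exists (Rmin 1 (eps * eps / 4)).
  split; [apply Rmin_pos; nra|]. intros t [Ht Htd].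
  pose proof (Rmin_l 1 (eps * eps / 4)) as Hd1. pose proof (Rmin_r 1 (eps * eps / 4)) as Hd2.
  set (s := sqrt t).
  assert (Hs : 0 < s) by (apply sqrt_lt_R0; exact Ht).
  assert (Hss : s * s = t) by (apply sqrt_sqrt; lra).
  assert (Hlnt : ln t = 2 * ln s) by (rewrite <- Hss, ln_mult by exact Hs; ring).
  (* [- s ln s = s ln (1/s) <= 1 - s], hence [|t ln t| = - 2 s (s ln s) < 2 s] *)
  assert (Hsln : - (s * ln s) <= 1 - s).
  { pose proof (ln_le_sub1 (/ s) (Rinv_0_lt_compat s Hs)) as H.
    rewrite ln_Rinv in H by exact Hs.
    apply (Rmult_le_compat_l s) in H; [|lra].
    rewrite Rmult_minus_distr_l, Rinv_r in H by lra. lra. }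
  assert (Hlnneg : ln t < 0) by (rewrite <- ln_1; apply ln_increasing; lra).
  assert (Hseps : s < eps / 2) by nra.
  rewrite Rabs_left by nra. rewrite Hlnt, <- Hss. nra.
Qed.

(* Two-sided continuity at [c <= 0] holds because [ln] vanishes there. *)
Lemma continuity_xlogx : continuity xlogx.
Proof.
  intros c. destruct (Rlt_or_le 0 c) as [Hc|Hc].
  - apply (continuity_pt_ext (fun t => t * ln t)); [intro t; symmetry; apply xlogxE|].
    apply continuity_pt_filterlim, (ex_derive_continuous (fun t => t * ln t)).
    auto_derive. exact Hc.
  - intros eps Heps. destruct (xlnx_near0 eps Heps) as [d [Hd Hsmall]].
    exists d. split; [exact Hd|]. intros t [_ Ht]. simpl in Ht |- *. unfold R_dist in *.
    rewrite !xlogxE, (ln_nonpos c Hc), Rmult_0_r, Rminus_0_r.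
    destruct (Rle_or_lt t 0) as [Ht0|Ht0].
    + rewrite ln_nonpos, Rmult_0_r, Rabs_R0 by exact Ht0. exact Heps.
    + apply Hsmall. split; [exact Ht0|].
      pose proof (Rle_abs (t - c)). lra.
Qed.

Lemma MVT_open f df a b : a < b ->
  (forall c, a < c < b -> derivable_pt_lim f c (df c)) ->
  (forall c, a <= c <= b -> continuity_pt f c) ->
  exists c, a < c < b /\ f b - f a = df c * (b - a).
Proof.
  intros Hab Hd Hf.
  pose (pr := fun c (Hc : a < c < b) => exist _ (df c) (Hd c Hc) : derivable_pt f c).
  destruct (MVT f id a b pr (fun c _ => derivable_pt_id c) Hab Hf
    (fun c _ => derivable_continuous_pt id c (derivable_pt_id c))) as [c [Hc E]].
  exists c. split; [exact Hc|].
  rewrite derive_pt_id in E. change (derive_pt f c (pr c Hc)) with (df c) in E.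
  unfold id in E. lra.
Qed.

Lemma continuity_IVT f a b y : continuity f -> a <= b ->
  (f a <= y <= f b \/ f b <= y <= f a) -> exists z, a <= z <= b /\ f z = y.
Proof.
  intros Hf Hab Hy.
  destruct (IVT_gen f a b y Hf) as [z [Hz Ez]].
  - destruct Hy as [Hy|Hy].
    + rewrite Rmin_left, Rmax_right by lra. exact Hy.
    + rewrite Rmin_right, Rmax_left by lra. exact Hy.
  - rewrite Rmin_left, Rmax_right in Hz by exact Hab. exists z. split; assumption.
Qed.

Section Lemma62.

Variables p q : R.
Hypothesis hq : 0 < q.
Hypothesis hqp : q < p.
Hypothesis hpq : p + q = 1.

Lemma p_pos : 0 < p.
Proof. lra. Qed.

Lemma ln_q_neg : ln q < 0.
Proof. rewrite <- ln_1. apply ln_increasing; lra. Qed.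

Lemma ln_2q_neg : ln (2 * q) < 0.
Proof. rewrite <- ln_1. apply ln_increasing; lra. Qed.

Lemma ln_2pq_lt_ln_2q : ln (2 * p * q) < ln (2 * q).
Proof. apply ln_increasing; nra. Qed.

Lemma ln_kappa_neg : ln (q * (1 + 2 * p)) < 0.
Proof. rewrite <- ln_1. apply ln_increasing; [nra|]. replace p with (1 - q) by lra. nra. Qed.

Lemma lt_div_p x : 0 < x -> x < x / p.
Proof.
  intros Hx. apply (Rmult_lt_reg_r p); [exact p_pos|].
  replace (x / p * p) with x by (field; lra). nra.
Qed.

Lemma gE x y :
  g p q x y = x * ln x - y * ln y + (y - x) * ln (y - x) - x * ln (2 * p) - y * ln q.
Proof. unfold g. rewrite !xlogxE. reflexivity. Qed.

Lemma g_split_lambda x y : 0 < y ->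
  g p q x y = - x * ln (2 * q) + (relent x (p * y) + relent (y - x) (q * y)).
Proof. intros Hy. rewrite gE. unfold relent. rewrite !ln_mult by lra. ring. Qed.

Lemma g_split_kappa x y : 0 < y ->
  g p q x y = - y * ln (q * (1 + 2 * p))
    + (relent x (2 * p * y / (1 + 2 * p)) + relent (y - x) (y / (1 + 2 * p))).
Proof.
  intros Hy. rewrite gE. unfold relent. rewrite !ln_div by nra. rewrite !ln_mult by nra.
  ring.
Qed.

Lemma g_ge_lambda x y : 0 <= x <= y -> 0 < y -> - x * ln (2 * q) <= g p q x y.
Proof.
  intros Hx Hy. rewrite (g_split_lambda x y Hy).
  enough (0 <= relent x (p * y) + relent (y - x) (q * y)) by lra.
  apply relent2_ge0; nra.
Qed.

Lemma g_eq_lambda x y : 0 <= x <= y -> 0 < y ->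
  g p q x y = - x * ln (2 * q) -> x = p * y.
Proof.
  intros Hx Hy E. rewrite (g_split_lambda x y Hy) in E.
  apply (relent2_eq0 x (y - x) (p * y) (q * y)); nra.
Qed.

Lemma g_ge_kappa x y : 0 <= x <= y -> 0 < y -> - y * ln (q * (1 + 2 * p)) <= g p q x y.
Proof.
  intros Hx Hy. rewrite (g_split_kappa x y Hy).
  enough (0 <= relent x (2 * p * y / (1 + 2 * p)) + relent (y - x) (y / (1 + 2 * p))) by lra.
  apply relent2_ge0; try lra.
  - apply Rdiv_lt_0_compat; nra.
  - apply Rdiv_lt_0_compat; lra.
  - field. lra.
Qed.

Lemma g_eq_kappa x y : 0 <= x <= y -> 0 < y ->
  g p q x y = - y * ln (q * (1 + 2 * p)) -> x = 2 * p * y / (1 + 2 * p).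
Proof.
  intros Hx Hy E. rewrite (g_split_kappa x y Hy) in E.
  apply (relent2_eq0 x (y - x) _ (y / (1 + 2 * p))); try lra.
  - apply Rdiv_lt_0_compat; nra.
  - apply Rdiv_lt_0_compat; lra.
  - field. lra.
Qed.

Lemma g_diag x : g p q x x = - x * ln (2 * p * q).
Proof.
  rewrite gE. replace (x - x) with 0 by ring.
  rewrite (ln_mult (2 * p) q) by nra. ring.
Qed.

Lemma g_at_x_div_p x : 0 < x -> g p q x (x / p) = - x * ln (2 * q).
Proof.
  intros Hx. rewrite (g_split_lambda x (x / p)) by (apply Rdiv_lt_0_compat; lra).
  replace (p * (x / p)) with x by (field; lra).
  replace (q * (x / p)) with (x / p - x) by (replace q with (1 - p) by lra; field; lra).
  unfold relent. ring.
Qed.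

Lemma g_at_kappa_point y : 0 < y ->
  g p q (2 * p * y / (1 + 2 * p)) y = - y * ln (q * (1 + 2 * p)).
Proof.
  intros Hy. rewrite (g_split_kappa _ y Hy).
  replace (y - 2 * p * y / (1 + 2 * p)) with (y / (1 + 2 * p)) by (field; lra).
  unfold relent. ring.
Qed.

Lemma g_0_l y : g p q 0 y = - y * ln q.
Proof. rewrite gE. rewrite Rminus_0_r. ring. Qed.

Lemma g_derive x y : 0 < x < y ->
  derivable_pt_lim (g p q x) y (ln (y - x) - ln y - ln q).
Proof.
  intros Hxy. apply is_derive_Reals.
  apply (is_derive_ext
    (fun y => x * ln x - y * ln y + (y - x) * ln (y - x) - x * ln (2 * p) - y * ln q)).
  { intro t. symmetry. apply gE. }
  auto_derive.
  - repeat split; lra.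
  - unfold Rminus. field. split; lra.
Qed.

Lemma g_continuous x : continuity (g p q x).
Proof.
  pose proof continuity_xlogx as Hc.
  unfold g.
  repeat first [ apply continuity_minus | apply continuity_plus | apply continuity_mult
    | apply continuity_const; intros ? ?; reflexivity
    | apply derivable_continuous, derivable_id | exact Hc ].
  apply (continuity_comp (fun y => y - x) xlogx); [|exact Hc].
  apply continuity_minus; [apply derivable_continuous, derivable_id|].
  apply continuity_const. intros ? ?. reflexivity.
Qed.

(* The derivative [ln (c - x) - ln c - ln q] has the sign of [(c - x) - q c = p c - x]. *)
Lemma g_decr x a b : 0 < x -> x <= a < b -> b <= x / p -> g p q x b < g p q x a.
Proof.
  intros Hx Hab Hb.
  destruct (MVT_open (g p q x) (fun c => ln (c - x) - ln c - ln q) a b)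
    as [c [Hc E]]; [lra | intros c Hc; apply g_derive; lra | intros c _; apply g_continuous |].
  assert (Hpc : p * c < x).
  { replace x with (p * (x / p)) by (field; lra). pose proof p_pos. nra. }
  assert (Hln : ln (c - x) < ln (q * c)) by (apply ln_increasing; nra).
  rewrite ln_mult in Hln by lra. nra.
Qed.

Lemma g_incr x a b : 0 < x -> x / p <= a < b -> g p q x a < g p q x b.
Proof.
  intros Hx Hab.
  pose proof (lt_div_p x Hx) as Hxp.
  destruct (MVT_open (g p q x) (fun c => ln (c - x) - ln c - ln q) a b)
    as [c [Hc E]]; [lra | intros c Hc; apply g_derive; lra | intros c _; apply g_continuous |].
  assert (Hpc : x < p * c).
  { replace x with (p * (x / p)) by (field; lra). pose proof p_pos. nra. }
  assert (Hln : ln (q * c) < ln (c - x)) by (apply ln_increasing; nra).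
  rewrite ln_mult in Hln by lra. nra.
Qed.

Lemma g_le_diag x y : 0 < x -> x <= y <= x / p -> g p q x y <= g p q x x.
Proof.
  intros Hx [[Hy | <-] Hyp]; [|lra].
  left. apply g_decr; lra.
Qed.

Lemma g_eq_unique_decr x y y' : 0 < x -> x <= y <= x / p -> x <= y' <= x / p ->
  g p q x y = g p q x y' -> y = y'.
Proof.
  intros Hx Hy Hy' E. destruct (Rtotal_order y y') as [Hlt|[Heq|Hgt]]; [|exact Heq|].
  - pose proof (g_decr x y y' Hx ltac:(lra) ltac:(lra)). lra.
  - pose proof (g_decr x y' y Hx ltac:(lra) ltac:(lra)). lra.
Qed.

Lemma g_eq_unique_incr x y y' : 0 < x -> x / p <= y -> x / p <= y' ->
  g p q x y = g p q x y' -> y = y'.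
Proof.
  intros Hx Hy Hy' E. destruct (Rtotal_order y y') as [Hlt|[Heq|Hgt]]; [|exact Heq|].
  - pose proof (g_incr x y y' Hx ltac:(lra)). lra.
  - pose proof (g_incr x y' y Hx ltac:(lra)). lra.
Qed.

Lemma g_root_above x : 0 < x -> - x * ln (2 * q) < 1 ->
  exists y, x / p < y /\ g p q x y = 1.
Proof.
  intros Hx Hmin. pose proof (lt_div_p x Hx). pose proof ln_kappa_neg.
  set (kappa0 := - / ln (q * (1 + 2 * p))).
  pose proof (opp_inv_mul_opp (ln (q * (1 + 2 * p))) ltac:(lra)).
  set (Y := Rmax kappa0 (x / p) + 1).
  pose proof (Rmax_l kappa0 (x / p)). pose proof (Rmax_r kappa0 (x / p)).
  assert (HY : 1 < g p q x Y).
  { pose proof (g_ge_kappa x Y ltac:(unfold Y; lra) ltac:(unfold Y; lra)).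
    unfold Y, kappa0 in *. nra. }
  destruct (continuity_IVT (g p q x) (x / p) Y 1) as [y [Hy E]].
  - apply g_continuous.
  - unfold Y. lra.
  - left. rewrite g_at_x_div_p by exact Hx. lra.
  - exists y. split; [|exact E].
    destruct Hy as [[Hy | <-] _]; [exact Hy|].
    rewrite g_at_x_div_p in E by exact Hx. lra.
Qed.

Lemma g_root_below x : 0 < x -> - x * ln (2 * q) < 1 <= - x * ln (2 * p * q) ->
  exists y, x <= y < x / p /\ g p q x y = 1.
Proof.
  intros Hx Hbounds. pose proof (lt_div_p x Hx).
  destruct (continuity_IVT (g p q x) x (x / p) 1) as [y [Hy E]].
  - apply g_continuous.
  - lra.
  - right. rewrite g_at_x_div_p, g_diag by exact Hx. lra.
  - exists y. split; [|exact E]. split; [lra|].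
    destruct Hy as [_ [Hy | ->]]; [exact Hy|].
    rewrite g_at_x_div_p in E by exact Hx. lra.
Qed.

Lemma sol_y_pos x y : sol p q x y -> 0 < y.
Proof.
  intros [Hx [Hxy E]]. destruct (Rlt_or_le 0 y) as [Hy|Hy]; [exact Hy|].
  replace x with 0 in E by lra. replace y with 0 in E by lra.
  rewrite g_0_l in E. lra.
Qed.

Lemma sol_x_le x y : sol p q x y -> x <= - / ln (2 * q).
Proof.
  intros Hs. pose proof (sol_y_pos x y Hs) as Hy. destruct Hs as [Hx [Hxy E]].
  pose proof (g_ge_lambda x y ltac:(lra) Hy). pose proof ln_2q_neg.
  pose proof (opp_inv_mul_opp (ln (2 * q)) ltac:(lra)). nra.
Qed.

Lemma sol_y_le x y : sol p q x y -> y <= - / ln (q * (1 + 2 * p)).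
Proof.
  intros Hs. pose proof (sol_y_pos x y Hs) as Hy. destruct Hs as [Hx [Hxy E]].
  pose proof (g_ge_kappa x y ltac:(lra) Hy). pose proof ln_kappa_neg.
  pose proof (opp_inv_mul_opp (ln (q * (1 + 2 * p))) ltac:(lra)). nra.
Qed.

Lemma sol_lambda0_iff y :
  sol p q (- / ln (2 * q)) y <-> y = - / (p * ln (2 * q)).
Proof.
  pose proof ln_2q_neg. pose proof p_pos.
  set (lambda0 := - / ln (2 * q)).
  assert (Hl : - lambda0 * ln (2 * q) = 1) by (unfold lambda0; field; lra).
  assert (Hl0 : 0 < lambda0) by (apply opp_inv_pos; lra).
  replace (- / (p * ln (2 * q))) with (lambda0 / p) by (unfold lambda0; field; lra).
  split.
  - intros Hs. pose proof (sol_y_pos _ _ Hs) as Hy. destruct Hs as [Hx [Hxy E]].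
    rewrite (g_eq_lambda lambda0 y ltac:(lra) Hy ltac:(lra)). field. lra.
  - intros ->. pose proof (lt_div_p lambda0 Hl0).
    split; [lra | split; [lra|]]. rewrite g_at_x_div_p; lra.
Qed.

Lemma sol_kappa0_iff x :
  sol p q x (- / ln (q * (1 + 2 * p))) <->
  x = 2 * (- / ln (q * (1 + 2 * p))) * p / (2 * p + 1).
Proof.
  pose proof ln_kappa_neg.
  set (kappa0 := - / ln (q * (1 + 2 * p))).
  assert (Hk : - kappa0 * ln (q * (1 + 2 * p)) = 1) by (unfold kappa0; field; lra).
  assert (Hk0 : 0 < kappa0) by (apply opp_inv_pos; lra).
  replace (2 * kappa0 * p / (2 * p + 1)) with (2 * p * kappa0 / (1 + 2 * p))
    by (field; lra).
  split.
  - intros [Hx [Hxy E]]. apply g_eq_kappa; lra.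
  - intros ->.
    assert (2 * p * kappa0 / (1 + 2 * p) * (1 + 2 * p) = 2 * p * kappa0) by (field; lra).
    split; [nra | split; [nra|]]. rewrite g_at_kappa_point; lra.
Qed.

Lemma sol_0_iff y : sol p q 0 y <-> y = - / ln q.
Proof.
  pose proof ln_q_neg as Hq. unfold sol. rewrite g_0_l.
  split.
  - intros [_ [_ E]]. apply (Rmult_eq_reg_r (- ln q)); [|lra].
    rewrite opp_inv_mul_opp by lra. lra.
  - intros ->. pose proof (opp_inv_pos (ln q) Hq).
    split; [lra | split; [lra|]]. field. lra.
Qed.

Lemma sol_unique_below_x1 x : 0 < x < - / ln (2 * p * q) ->
  exists y, sol p q x y /\ forall y', sol p q x y' -> y' = y.
Proof.
  intros [Hx Hx1]. pose proof ln_2pq_lt_ln_2q. pose proof ln_2q_neg.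
  pose proof (lt_div_p x Hx).
  pose proof (opp_inv_mul_opp (ln (2 * p * q)) ltac:(lra)).
  assert (Hdiag : g p q x x < 1) by (rewrite g_diag; nra).
  destruct (g_root_above x Hx ltac:(nra)) as [y [Hy E]].
  exists y. split; [split; [lra | split; [lra | exact E]]|].
  intros y' [_ [Hxy' E']].
  destruct (Rlt_or_le y' (x / p)) as [Hy'|Hy'].
  - pose proof (g_le_diag x y' Hx ltac:(lra)). lra.
  - apply (g_eq_unique_incr x); lra.
Qed.

Lemma sol_two_between x : - / ln (2 * p * q) <= x < - / ln (2 * q) ->
  exists y1 y2, y1 < y2 /\ sol p q x y1 /\ sol p q x y2 /\
    forall y', sol p q x y' -> y' = y1 \/ y' = y2.
Proof.
  intros [Hx1 Hx2]. pose proof ln_2pq_lt_ln_2q. pose proof ln_2q_neg.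
  pose proof (opp_inv_mul_opp (ln (2 * p * q)) ltac:(lra)).
  pose proof (opp_inv_mul_opp (ln (2 * q)) ltac:(lra)).
  pose proof (opp_inv_pos (ln (2 * p * q)) ltac:(lra)).
  assert (Hx : 0 < x) by lra. pose proof (lt_div_p x Hx).
  assert (Hmin : - x * ln (2 * q) < 1) by nra.
  assert (Hdiag : 1 <= - x * ln (2 * p * q)) by nra.
  destruct (g_root_below x Hx (conj Hmin Hdiag)) as [y1 [Hy1 E1]].
  destruct (g_root_above x Hx Hmin) as [y2 [Hy2 E2]].
  exists y1, y2. split; [lra|].
  split; [split; [lra | split; [lra | exact E1]]|].
  split; [split; [lra | split; [lra | exact E2]]|].
  intros y' [_ [Hxy' E']].
  destruct (Rle_or_lt y' (x / p)) as [Hy'|Hy'].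
  - left. apply (g_eq_unique_decr x); lra.
  - right. apply (g_eq_unique_incr x); lra.
Qed.

End Lemma62.

Theorem lemma6p2 (p q : R) (hq : 0 < q) (hqp : q < p) (hp : p < 1)
  (hpq : p + q = 1) :
  let lambda0 := - / ln (2 * q) in
  let kappa0 := - / ln (q * (1 + 2 * p)) in
  let x1 := - / ln (2 * p * q) in
  ((exists y, sol p q lambda0 y) /\ (forall x y, sol p q x y -> x <= lambda0)) /\
  ((exists x, sol p q x kappa0) /\ (forall x y, sol p q x y -> y <= kappa0)) /\
  (forall y, sol p q lambda0 y -> y = - / (p * ln (2 * q))) /\
  (forall x, sol p q x kappa0 -> x = 2 * kappa0 * p / (2 * p + 1)) /\
  (forall y, sol p q 0 y -> y = - / ln q) /\
  (forall x, (0 <= x < x1 \/ x = lambda0) ->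
     exists y, sol p q x y /\ forall y', sol p q x y' -> y' = y) /\
  (forall x, x1 <= x < lambda0 ->
     exists y1 y2, y1 < y2 /\ sol p q x y1 /\ sol p q x y2 /\
       forall y', sol p q x y' -> y' = y1 \/ y' = y2).
Proof.
  intros lambda0 kappa0 x1.
  split; [split|split; [split|]].
  - eexists. apply sol_lambda0_iff; trivial.
  - apply sol_x_le; trivial.
  - eexists. apply sol_kappa0_iff; trivial.
  - apply sol_y_le; trivial.
  - split; [intro y; apply sol_lambda0_iff; trivial|].
    split; [intro x; apply sol_kappa0_iff; trivial|].
    split; [intro y; apply sol_0_iff; trivial|].
    split; [|apply sol_two_between; trivial].
    intros x [[[Hx | <-] Hx1] | ->].
    + apply sol_unique_below_x1; auto.
    + exists (- / ln q). split; [apply sol_0_iff; trivial|].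
      intro y'. apply sol_0_iff; trivial.
    + exists (- / (p * ln (2 * q))). split; [apply sol_lambda0_iff; trivial|].
      intro y'. apply sol_lambda0_iff; trivial.
Qed.
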